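(* Let $G$ be a cyclic group of order $3$ and $\mathbb{Z}_{(2)} = \{ m/n : m,n\in\mathbb{Z},\ n \text{ odd}\}$. Then the group ring $\mathbb{Z}_{(2)}G$ is strongly clean.
   Context: All rings are associative with identity. An element $x$ of a ring $R$ is strongly clean if $x = e+u$ with $e^2=e$, $u$ a unit, and $eu=ue$; $R$ is strongly clean if every element is. *)

From HB Require Import structures.
From mathcomp Require Import all_boot all_order all_algebra all_fingroup.
Set Implicit Arguments. Unset Strict Implicit. Unset Printing Implicit Defensive.
Import GRing.Theory.
Local Open Scope ring_scope.

Definition inZ2 (q : rat) : Prop :=
  exists (m n : int), odd `|n|%N /\ q = m%:~R / n%:~R.

(* The group ring S[G] of a finite group G over a subring S of a ring R:
   its elements are the functions G -> R with all coefficients in S,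
   with pointwise addition and convolution product. *)
Definition grelt (R : nzRingType) (gT : finGroupType) (S : R -> Prop)
  (f : {ffun gT -> R}) : Prop := forall g : gT, S (f g).

Definition gradd (R : nzRingType) (gT : finGroupType) (f h : {ffun gT -> R})
  : {ffun gT -> R} := [ffun x => f x + h x].

Definition grmul (R : nzRingType) (gT : finGroupType) (f h : {ffun gT -> R})
  : {ffun gT -> R} := [ffun x => \sum_(y : gT) f y * h (y^-1 * x)%g].

Definition grone (R : nzRingType) (gT : finGroupType) : {ffun gT -> R} :=
  [ffun x => if x == 1%g then 1 else 0].

Definition gr_strongly_clean_elt (R : nzRingType) (gT : finGroupType)
  (S : R -> Prop) (x : {ffun gT -> R}) : Prop :=
  exists e u v : {ffun gT -> R},
    [/\ grelt S e, grelt S u, grelt S v & x = gradd e u] /\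
    [/\ grmul e e = e, grmul u v = grone R gT, grmul v u = grone R gT
      & grmul e u = grmul u e].

Definition gr_strongly_clean (R : nzRingType) (gT : finGroupType)
  (S : R -> Prop) : Prop :=
  forall x : {ffun gT -> R}, grelt S x -> gr_strongly_clean_elt S x.

From HB Require Import structures.
From mathcomp Require Import all_boot all_order all_algebra all_fingroup all_solvable.
From mathcomp Require Import ring.
Set Implicit Arguments. Unset Strict Implicit. Unset Printing Implicit Defensive.
Import GRing.Theory.

(* Let G = <g> be cyclic of order 3.  An element of the group ring R[G] is
   determined by its coefficients at 1, g, g^2, and the convolution product
   becomes the circulant product of triples; we therefore work with triples.

   Over Q, Q[G] has the four idempotents 0, 1, (1+g+g^2)/3 and (2-g-g^2)/3,
   all with coefficients in Z_(2) because 3 is odd.  A triple u is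
   invertible as soon as its circulant norm N(u) = u0^3+u1^3+u2^3-3u0u1u2 is
   nonzero, with inverse adj(u)/N(u); the inverse has coefficients in Z_(2)
   when u does and N(u) is a 2-adic unit.  Reducing mod 2, Z_(2)[G] maps onto
   F_2[G] = F_2 x F_4, and for every x one of the four idempotents e makes
   both components of x - e nonzero, i.e. N(x - e) odd.  Concretely, after
   writing x = A/D with D odd, the choice of e depends only on the parities
   of A, and the oddness of N(x - e) is a finite computation in Z/2. *)

Local Open Scope ring_scope.

Record tri (T : Type) := Tri { t0 : T; t1 : T; t2 : T }.

Definition tmap (T U : Type) (f : T -> U) (a : tri T) : tri U :=
  Tri (f (t0 a)) (f (t1 a)) (f (t2 a)).

Definition tall (T : Type) (P : T -> Prop) (a : tri T) : Prop :=
  [/\ P (t0 a), P (t1 a) & P (t2 a)].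

Section CirculantOps.
Variable R : nzRingType.
Implicit Types (a b : tri R) (c : R).

Definition tadd a b : tri R := Tri (t0 a + t0 b) (t1 a + t1 b) (t2 a + t2 b).
Definition tscale c a : tri R := Tri (c * t0 a) (c * t1 a) (c * t2 a).
Definition tone : tri R := Tri 1 0 0.
Definition tmul a b : tri R :=
  Tri (t0 a * t0 b + t1 a * t2 b + t2 a * t1 b)
      (t0 a * t1 b + t1 a * t0 b + t2 a * t2 b)
      (t0 a * t2 b + t1 a * t1 b + t2 a * t0 b).
Definition tnorm a : R :=
  t0 a ^+ 3 + t1 a ^+ 3 + t2 a ^+ 3 - 3 * (t0 a * t1 a * t2 a).
Definition tadj a : tri R :=
  Tri (t0 a ^+ 2 - t1 a * t2 a) (t2 a ^+ 2 - t0 a * t1 a) (t1 a ^+ 2 - t0 a * t2 a).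

End CirculantOps.

Section CirculantTheory.
Variable R : comNzRingType.
Implicit Types (a b : tri R) (c d : R).

Lemma tmulC a b : tmul a b = tmul b a.
Proof. by case: a b => [a0 a1 a2] [b0 b1 b2]; rewrite /tmul /=; congr Tri; ring. Qed.

Lemma tmulZ c d a b : tmul (tscale c a) (tscale d b) = tscale (c * d) (tmul a b).
Proof. by case: a b => [a0 a1 a2] [b0 b1 b2]; rewrite /tmul /tscale /=; congr Tri; ring. Qed.

Lemma tmul_adj a : tmul a (tadj a) = Tri (tnorm a) 0 0.
Proof. by case: a => a0 a1 a2; rewrite /tmul /tnorm /=; congr Tri; ring. Qed.

Lemma tmap_tadj (S : comNzRingType) (f : {rmorphism R -> S}) a :
  tmap f (tadj a) = tadj (tmap f a).
Proof. by case: a => a0 a1 a2; rewrite /tmap /tadj /= !rmorphB !rmorphXn !rmorphM. Qed.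

Lemma rmorph_tnorm (S : comNzRingType) (f : {rmorphism R -> S}) a :
  f (tnorm a) = tnorm (tmap f a).
Proof.
by case: a => a0 a1 a2; rewrite /tnorm /tmap /= rmorphB !rmorphD !rmorphXn !rmorphM rmorph_nat.
Qed.

End CirculantTheory.

Lemma odd_intr_neq0 (z : int) : odd `|z|%N -> (z%:~R : rat) != 0.
Proof. by move=> oz; rewrite intr_eq0; apply: contraTneq oz => ->. Qed.

Lemma inZ2_common_denom (x : tri rat) : tall inZ2 x ->
  exists (A : tri int) (D : int),
    odd `|D|%N /\ x = tscale (D%:~R)^-1 (tmap intr A).
Proof.
case: x => x0 x1 x2 [/= [m0 [n0 [on0 ->]]] [m1 [n1 [on1 ->]]] [m2 [n2 [on2 ->]]]].
exists (Tri (m0 * n1 * n2) (m1 * n0 * n2) (m2 * n0 * n1)), (n0 * n1 * n2).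
split; first by rewrite !abszM !oddM on0 on1 on2.
by rewrite /tscale /tmap /=; congr Tri; rewrite !intrM; field;
  rewrite !odd_intr_neq0.
Qed.

Lemma inZ2_scale_int (c : rat) (m n : int) (A : tri int) :
  odd `|n|%N -> c = m%:~R / n%:~R -> tall inZ2 (tscale c (tmap intr A)).
Proof.
move=> on ->; split; [exists (m * t0 A) | exists (m * t1 A) | exists (m * t2 A)];
  by exists n; split; rewrite // intrM mulrAC.
Qed.

Lemma intr_Z2 (z : int) : (z%:~R : 'Z_2) = (odd `|z|%N)%:R.
Proof.
rewrite {1}[z]intEsign rmorphM rmorph_sign /=.
have -> : (-1 : 'Z_2) = 1 by apply/val_inj.
rewrite expr1n mul1r.
change ((`|z|%N)%:R = (odd `|z|%N)%:R :> 'Z_2).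
by rewrite !Zp_nat; apply/val_inj => /=; rewrite modn2; case: (odd _).
Qed.

(* Three times the idempotent e chosen from the reduction x mod 2 in F_2[G]
   (given by the coordinate parities): e = 1 when x = 0 or x = 1 + g^k,
   e = (1+g+g^2)/3 when x = g + g^2, e = (2-g-g^2)/3 when x = 1 + g + g^2,
   and e = 0 when x = g^k is already a unit.  In each case x - e reduces
   to a unit of F_2[G]. *)
Definition idem_num (p : tri bool) : tri int :=
  let: Tri a b c := p in
  match a, b, c with
  | false, false, false | true, true, false | true, false, true => Tri 3 0 0
  | false, true, true => Tri 1 1 1
  | true, true, true => Tri 2 (-1) (-1)
  | _, _, _ => Tri 0 0 0
  end.

Definition idem (p : tri bool) : tri rat := tscale 3^-1 (tmap intr (idem_num p)).

Lemma idem_idem p : tmul (idem p) (idem p) = idem p.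
Proof.
by case: p => [[] [] []]; rewrite /idem /tmul /tscale /tmap /=; congr Tri; field.
Qed.

Definition parity (A : tri int) : tri bool := tmap (fun z => odd `|z|%N) A.

Lemma odd_intr_Z2 (z : int) : (z%:~R : 'Z_2) = 1 -> odd `|z|%N.
Proof. by rewrite intr_Z2; case: (odd _) => // /(congr1 val). Qed.

(* Key parity computation: with x = A/D (D odd) and e = E/3, the numerator
   3A - D E of x - e = (3A - D E)/(3D) has odd norm. *)
Lemma odd_tnorm_shift (A : tri int) (D : int) : odd `|D|%N ->
  odd `|tnorm (tadd (tscale 3 A) (tscale (- D) (idem_num (parity A))))|%N.
Proof.
move=> oD; apply: odd_intr_Z2.
case: A => A0 A1 A2; rewrite /tnorm /parity /tadd /tscale /tmap /=.
rewrite !(intrD, intrM, intrN, intrB, rmorphXn) !intr_Z2 oD.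
by case: (odd `|A0|%N); case: (odd `|A1|%N); case: (odd `|A2|%N); apply/val_inj.
Qed.

(* Strong cleanness for triples over Z_(2): x = e + u with e idempotent and
   u invertible; commutativity is automatic by tmulC. *)
Lemma circulant_strongly_clean (x : tri rat) : tall inZ2 x ->
  exists e u v : tri rat,
    [/\ tall inZ2 e, tall inZ2 u, tall inZ2 v & x = tadd e u] /\
    tmul e e = e /\ tmul u v = tone rat.
Proof.
move=> /inZ2_common_denom [A [D [oD ->]]].
set B := tadd (tscale 3 A) (tscale (- D) (idem_num (parity A))).
have oN : odd `|tnorm B|%N := odd_tnorm_shift A oD.
have o3D : odd `|(3 * D)%R|%N by rewrite abszM oddM oD.
exists (idem (parity A)), (tscale ((3 * D)%:~R)^-1 (tmap intr B)),
  (tscale ((3 * D)%:~R / (tnorm B)%:~R) (tmap intr (tadj B))).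
split; [split | split].
- by apply: (inZ2_scale_int (m := 1) (n := 3)).
- by apply: (inZ2_scale_int (m := 1) _ o3D); rewrite -[1%:~R]/1 div1r.
- by apply: (inZ2_scale_int _ oN).
- rewrite /idem /B /tadd /tscale /tmap /=; congr Tri; rewrite !(intrD, intrM, intrN);
    by field; rewrite odd_intr_neq0.
- exact: idem_idem.
rewrite (tmap_tadj intr) tmulZ tmul_adj -(rmorph_tnorm intr) /tscale /tone /=.
by congr Tri; rewrite ?mulr0 //; field; rewrite !odd_intr_neq0.
Qed.

Section CyclicGroupOfOrderThree.
Variables (R : nzRingType) (gT : finGroupType) (g : gT).
Hypotheses (ord_g : (#[g]%g = 3)%N) (gen_g : forall y : gT, y \in <[g]>%g).
Local Notation gp i := (g ^+ i)%g.

Lemma expg_inv_mul i k : (i < 3)%N -> (k < 3)%N ->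
  ((gp i)^-1 * gp k = gp ((3 - i + k) %% 3)%N)%g.
Proof.
move=> lt_i3 lt_k3; rewrite -[in RHS]ord_g expg_mod_order expgD.
congr (_ * _)%g; apply/eqP; rewrite ord_g eq_invg_mul -expgD (subnKC (ltnW lt_i3)).
by rewrite -ord_g expg_order.
Qed.

Lemma sum_gen (F : gT -> R) : \sum_(y : gT) F y = F (gp 0) + F (gp 1) + F (gp 2).
Proof.
have bij_gp : bijective (fun i : 'I_3 => gp i).
  apply: inj_card_bij => [i j /eqP|].
    by rewrite eq_expg_mod_order ord_g !modn_small ?ltn_ord // => /eqP /val_inj.
  rewrite card_ord -ord_g; apply: subset_leq_card; apply/subsetP => y _; exact: gen_g.
by rewrite (reindex _ (onW_bij _ bij_gp)) /= !big_ord_recr big_ord0 /= add0r.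
Qed.

Lemma ffun_gen_eq (f h : {ffun gT -> R}) :
  (forall i, (i < 3)%N -> f (gp i) = h (gp i)) -> f = h.
Proof.
move=> eq_fh; apply/ffunP => y.
by have [i lt_i ->] := cyclePmin (gen_g y); rewrite ord_g in lt_i; apply: eq_fh.
Qed.

Definition of_tri (t : tri R) : {ffun gT -> R} :=
  [ffun y => if y == gp 0 then t0 t else if y == gp 1 then t1 t else t2 t].

Definition coords (f : {ffun gT -> R}) : tri R := Tri (f (gp 0)) (f (gp 1)) (f (gp 2)).

Lemma of_triE t : [/\ of_tri t (gp 0) = t0 t, of_tri t (gp 1) = t1 t
                    & of_tri t (gp 2) = t2 t].
Proof. by rewrite !ffunE !eq_expg_mod_order ord_g. Qed.

Lemma of_tri_coords f : of_tri (coords f) = f.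
Proof.
have [e0 e1 e2] := of_triE (coords f).
by apply: ffun_gen_eq => -[|[|[|]]] // _; rewrite ?e0 ?e1 ?e2.
Qed.

Lemma grelt_of_tri (S : R -> Prop) t : tall S t -> grelt S (of_tri t).
Proof.
case=> S0 S1 S2 y; have [i lt_i ->] := cyclePmin (gen_g y); rewrite ord_g in lt_i.
by have [e0 e1 e2] := of_triE t; case: i lt_i => [|[|[|]]] //= _; rewrite ?e0 ?e1 ?e2.
Qed.

Lemma gradd_of_tri a b : gradd (of_tri a) (of_tri b) = of_tri (tadd a b).
Proof.
have [a0 a1 a2] := of_triE a; have [b0 b1 b2] := of_triE b.
have [c0 c1 c2] := of_triE (tadd a b).
by apply: ffun_gen_eq => -[|[|[|]]] // _; rewrite ffunE ?a0 ?a1 ?a2 ?b0 ?b1 ?b2 ?c0 ?c1 ?c2.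
Qed.

Lemma grmul_of_tri a b : grmul (of_tri a) (of_tri b) = of_tri (tmul a b).
Proof.
have [a0 a1 a2] := of_triE a; have [b0 b1 b2] := of_triE b.
have [c0 c1 c2] := of_triE (tmul a b).
apply: ffun_gen_eq => k lt_k3; rewrite ffunE sum_gen !expg_inv_mul //.
by case: k lt_k3 => [|[|[|]]] // _; rewrite /= ?a0 ?a1 ?a2 ?b0 ?b1 ?b2 ?c0 ?c1 ?c2.
Qed.

Lemma grone_of_tri : grone R gT = of_tri (tone R).
Proof.
have [c0 c1 c2] := of_triE (tone R).
apply: ffun_gen_eq => -[|[|[|]]] // _;
  by rewrite ffunE -(expg0 g) eq_expg_mod_order ord_g ?c0 ?c1 ?c2.
Qed.

End CyclicGroupOfOrderThree.

Close Scope ring_scope.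

Theorem corollary1p14 (gT : finGroupType) :
  cyclic [set: gT] -> #|[set: gT]| = 3 ->
  @gr_strongly_clean rat gT inZ2.
Proof.
move=> /cyclicP [g gen] card3 x x_Z2.
have ord_g : #[g]%g = 3 by rewrite /order -gen.
have gen_g y : y \in <[g]>%g by rewrite -gen inE.
have [e [u [v [[e_Z2 u_Z2 v_Z2 x_eu] [idem_e inv_uv]]]]] :=
  @circulant_strongly_clean (coords g x) (And3 (x_Z2 _) (x_Z2 _) (x_Z2 _)).
exists (of_tri g e), (of_tri g u), (of_tri g v).
rewrite -(of_tri_coords ord_g gen_g x) x_eu (gradd_of_tri ord_g gen_g).
rewrite !(grmul_of_tri ord_g gen_g) (grone_of_tri _ ord_g gen_g).
rewrite (tmulC v u) (tmulC e u) idem_e inv_uv.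
by split; split=> //; apply: (grelt_of_tri ord_g gen_g).
Qed.
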